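(* Let $k\ge2$, let $f_1,\ldots,f_k$ be primitive forms of square-free levels with weights $\kappa_1,\ldots,\kappa_k$, and let $\nu_1,\ldots,\nu_k$ be distinct positive integers with $a_{f_i}(\nu_i)\neq0$ for all $i$. Put $K=\max\{\nu_1,\ldots,\nu_k\}$. Then there exists a real number $c_0>0$, depending on $K$ and $f_1,\ldots,f_k$, such that for every positive integer $m$ with $m\equiv0\pmod{(2K)!}$ and every $i=1,\ldots,k$, $$c_0|\lambda_{f_i}(m_i)|\le|\lambda_{f_i}(m+\nu_i)|\le c_0^{-1}|\lambda_{f_i}(m_i)|$$ and $$c_0|\lambda_{f_i}(m_i)|\le\frac{|a_{f_i}(m+\nu_i)|}{m^{(\kappa_i-1)/2}}\le c_0^{-1}|\lambda_{f_i}(m_i)|,$$ where $m_i$ is defined by $m+\nu_i=\nu_im_i$.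
   Context: A primitive form of weight $\kappa$ and level $N$ is a holomorphic cusp form of weight $\kappa$ for $\Gamma_0(N)$ with trivial character which is a normalized Hecke eigenform for all Hecke operators and all Atkin–Lehner involutions; $f(z)=\sum_{n\ge1}a_f(n)q^n$ is its Fourier expansion, and $\lambda_f(n)=a_f(n)/n^{(\kappa-1)/2}$. *)

From Stdlib Require Import Reals ZArith Znumtheory Arith List Lia.
From Coquelicot Require Import Coquelicot.
Open Scope R_scope.

Fixpoint cpow (z : C) (n : nat) : C :=
  match n with O => RtoC 1 | S n' => Cmult z (cpow z n') end.

Definition csum (l : list nat) (g : nat -> C) : C :=
  fold_right (fun i acc => Cplus (g i) acc) (RtoC 0) l.

(* q = e^{2 pi i z} *)
Definition qexp (z : C) : C :=
  Cmult (RtoC (exp (-(2 * PI * Im z)))) (cos (2 * PI * Re z), sin (2 * PI * Re z)).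

Definition mobius (a b c d : Z) (z : C) : C :=
  Cdiv (Cplus (Cmult (RtoC (IZR a)) z) (RtoC (IZR b)))
       (Cplus (Cmult (RtoC (IZR c)) z) (RtoC (IZR d))).

Definition slash (kappa : nat) (a b c d : Z) (f : C -> C) (z : C) : C :=
  Cmult (RtoC (sqrt (IZR (a * d - b * c)) ^ kappa))
    (Cmult (Cinv (cpow (Cplus (Cmult (RtoC (IZR c)) z) (RtoC (IZR d))) kappa))
           (f (mobius a b c d z))).

Definition holomorphic_on_H (f : C -> C) : Prop :=
  forall z : C, 0 < Im z -> ex_derive (f : C_AbsRing -> C_NormedModule) z.

Definition modular_Gamma0 (kappa N : nat) (f : C -> C) : Prop :=
  forall a b c d : Z, (a * d - b * c = 1)%Z -> (Z.of_nat N | c)%Z ->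
    forall z : C, 0 < Im z -> slash kappa a b c d f z = f z.

Definition vanishes_at_cusps (kappa : nat) (f : C -> C) : Prop :=
  forall a b c d : Z, (a * d - b * c = 1)%Z ->
    forall eps : R, 0 < eps -> exists Y : R, forall z : C,
      Y < Im z -> Cmod (slash kappa a b c d f z) < eps.

Definition fourier_expansion (f : C -> C) (a : nat -> C) : Prop :=
  a O = RtoC 0 /\
  forall z : C, 0 < Im z ->
    is_series (fun n => Cmult (a n) (cpow (qexp z) n)) (f z).

(* Hecke operator T_n on weight kappa, level N (trivial character):
   (T_n f)(z) = n^{kappa-1} sum_{ad = n, (a,N)=1} sum_{b=0}^{d-1} d^{-kappa} f((az+b)/d) *)
Definition hecke (kappa N n : nat) (f : C -> C) (z : C) : C :=
  Cmult (RtoC (INR n ^ (kappa - 1)))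
    (csum (seq 1 n) (fun a =>
       if andb (Nat.eqb (n mod a) 0) (Nat.eqb (Nat.gcd a N) 1) then
         csum (seq 0 (n / a)) (fun b =>
           Cmult (Cinv (cpow (RtoC (INR (n / a))) kappa))
                 (f (Cdiv (Cplus (Cmult (RtoC (INR a)) z) (RtoC (INR b)))
                          (RtoC (INR (n / a))))))
       else RtoC 0)).

Definition hecke_eigenform (kappa N : nat) (f : C -> C) : Prop :=
  forall n : nat, (0 < n)%nat -> exists lam : C,
    forall z : C, 0 < Im z -> hecke kappa N n f z = Cmult lam (f z).

(* Atkin-Lehner involutions W_Q, Q || N: matrices [[Qx, y],[Nz, Qw]] of determinant Q *)
Definition atkin_lehner_eigenform (kappa N : nat) (f : C -> C) : Prop :=
  forall Q : nat, (0 < Q)%nat -> Nat.divide Q N -> Nat.gcd Q (N / Q) = 1%nat ->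
    exists eps : C, forall x y w t : Z,
      (Z.of_nat Q * x * (Z.of_nat Q * t) - y * (Z.of_nat N * w) = Z.of_nat Q)%Z ->
      forall z : C, 0 < Im z ->
        slash kappa (Z.of_nat Q * x) y (Z.of_nat N * w) (Z.of_nat Q * t) f z
        = Cmult eps (f z).

Definition primitive_form (kappa N : nat) (f : C -> C) (a : nat -> C) : Prop :=
  (0 < N)%nat /\
  holomorphic_on_H f /\
  modular_Gamma0 kappa N f /\
  vanishes_at_cusps kappa f /\
  fourier_expansion f a /\
  a 1%nat = RtoC 1 /\
  hecke_eigenform kappa N f /\
  atkin_lehner_eigenform kappa N f.

Definition squarefree (N : nat) : Prop :=
  forall d : nat, (1 < d)%nat -> ~ Nat.divide (d * d) N.

Definition lambda_f (kappa : nat) (a : nat -> C) (n : nat) : C :=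
  Cdiv (a n) (RtoC (sqrt (INR n) ^ (kappa - 1))).

(* Since f is a Hecke eigenform, comparing q-expansions in T_n f = t_n f gives
   a(nJ) = a(n) a(J) whenever gcd(n, J) = 1: for such J only the term A = 1 of the Hecke
   sum contributes to the J-th coefficient of T_n f.  The coefficients are read off on the
   imaginary axis, where q runs through (0, 1), by the identity theorem for power series.
   As nu^2 divides (2K)! and hence m, the cofactor m_i = 1 + m / nu is coprime to nu, so
   lambda(m + nu) = lambda(nu) lambda(m_i) with lambda(nu) <> 0 fixed; and m <= m + nu <=
   (1 + nu) m bounds the change of normalisation from (m + nu)^((kappa-1)/2) to
   m^((kappa-1)/2). *)

From Stdlib Require Import Reals ZArith Arith List Lia Lra.
From Coquelicot Require Import Coquelicot.
Open Scope R_scope.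

Lemma cpow_RtoC (s : R) (j : nat) : cpow (RtoC s) j = RtoC (s ^ j).
Proof.
  induction j as [|j IH]; simpl; [reflexivity|].
  now rewrite IH, RtoC_mult.
Qed.

Lemma cpow_mult (z w : C) (j : nat) : cpow (z * w) j = (cpow z j * cpow w j)%C.
Proof. induction j as [|j IH]; simpl; [ring|]. rewrite IH. ring. Qed.

(* Unlike [is_series_ext], the pointwise equation lives in [C], so [ring] applies to it. *)
Lemma is_series_C_ext (u v : nat -> C) (l : C) :
  (forall n, u n = v n) -> is_series u l -> is_series v l.
Proof. apply is_series_ext. Qed.

Lemma is_series_C0 : is_series (fun _ => RtoC 0) (RtoC 0).
Proof.
  unfold is_series. apply (filterlim_ext (fun _ => zero)); [|apply filterlim_const].
  intros N. symmetry. exact (sum_n_m_const_zero 0 N).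
Qed.

Lemma is_series_Cmult_l (c : C) (u : nat -> C) (l : C) :
  is_series u l -> is_series (fun n => c * u n)%C (c * l)%C.
Proof. apply (is_series_scal (V := C_NormedModule)). Qed.

Lemma is_series_Cminus (u v : nat -> C) (lu lv : C) :
  is_series u lu -> is_series v lv -> is_series (fun n => u n - v n)%C (lu - lv)%C.
Proof. apply (is_series_minus (V := C_NormedModule)). Qed.

Lemma is_series_Re (u : nat -> C) (l : C) :
  is_series u l -> is_series (fun n => Re (u n)) (Re l).
Proof.
  unfold is_series; intros Hu.
  assert (Hsum : forall N, sum_n (fun n => Re (u n)) N = Re (sum_n u N)).
  { induction N as [|N IH]; [now rewrite !sum_O|].
    now rewrite !sum_Sn, IH. }
  assert (Hcont : filterlim Re (locally l) (locally (Re l))).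
  { intros P [eps HP]. exists eps. intros z [Hz _]. exact (HP _ Hz). }
  eapply filterlim_ext; [intros N; symmetry; apply Hsum|].
  eapply filterlim_comp; [exact Hu|exact Hcont].
Qed.

(* [Im z = Re (-i z)]. *)
Lemma is_series_Im (u : nat -> C) (l : C) :
  is_series u l -> is_series (fun n => Im (u n)) (Im l).
Proof.
  intros Hu. apply (is_series_scal ((0, -1) : C)) in Hu.
  apply is_series_Re in Hu.
  eapply is_series_ext; [|replace (Im l) with (Re (scal ((0, -1) : C) l)); [exact Hu|]];
    [intros n|]; unfold scal; simpl; unfold mult; simpl; unfold Re, Im; simpl; ring.
Qed.

(** * Identity theorem for power series on (0, 1) *)

Lemma pseries_zero_coef0 (c : nat -> R) :
  (forall s, 0 < s < 1 -> is_series (fun j => c j * s ^ j) 0) -> c 0%nat = 0.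
Proof.
  intros Hc.
  assert (Hrad : Rbar_lt 0 (CV_radius c)).
  { assert (Hlim : is_lim_seq (fun j => c j * (1 / 2) ^ j) 0).
    { apply ex_series_lim_0. eexists. apply Hc. lra. }
    apply is_lim_seq_Reals in Hlim.
    destruct (maj_by_pos _ (exist _ 0 Hlim)) as [M [_ HM]].
    assert (Hle : Rbar_le (1 / 2) (CV_radius c)) by (apply (CV_radius_bounded c); now exists M).
    destruct (CV_radius c) as [r| |]; simpl in Hle |- *; lra. }
  assert (Hcont : filterlim (PSeries c) (at_right 0) (locally (PSeries c 0))).
  { apply (filterlim_filter_le_1 (F := locally 0)); [apply filter_le_within|].
    apply continuity_pt_filterlim, PSeries_continuity. rewrite Rabs_R0. exact Hrad. }
  assert (Hzero : filterlim (PSeries c) (at_right 0) (locally 0)).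
  { apply (filterlim_ext_loc (fun _ => 0)); [|apply filterlim_const].
    exists (mkposreal 1 Rlt_0_1). intros s Hs Hpos.
    symmetry. apply is_series_unique. apply Hc. split; [exact Hpos|].
    change (Rabs (s - 0) < 1) in Hs. rewrite Rminus_0_r, Rabs_pos_eq in Hs; lra. }
  rewrite <- PSeries_0.
  exact (@filterlim_locally_unique _ _ R_NormedModule _ _ (PSeries c) _ _ Hcont Hzero).
Qed.

Lemma pseries_zero_coef (c : nat -> R) :
  (forall s, 0 < s < 1 -> is_series (fun j => c j * s ^ j) 0) -> forall j, c j = 0.
Proof.
  intros Hc j. revert c Hc. induction j as [|j IH]; intros c Hc.
  - now apply pseries_zero_coef0.
  - apply (IH (fun j => c (S j))). intros s Hs.
    assert (Hshift : is_series (fun j => c (S j) * s ^ S j) 0).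
    { apply (is_series_incr_1 (fun j => c j * s ^ j)).
      rewrite (pseries_zero_coef0 c Hc), Rmult_0_l. unfold plus; simpl.
      rewrite Rplus_0_r. now apply Hc. }
    apply (is_series_scal_r (/ s)) in Hshift. rewrite Rmult_0_l in Hshift.
    eapply is_series_ext; [|exact Hshift]. intros n. simpl. field. lra.
Qed.

Lemma cpseries_zero_coef (c : nat -> C) :
  (forall s, 0 < s < 1 -> is_series (fun j => c j * cpow (RtoC s) j)%C (RtoC 0)) ->
  forall j, c j = RtoC 0.
Proof.
  intros Hc.
  assert (HRe : forall j, Re (c j) = 0).
  { apply pseries_zero_coef. intros s Hs.
    eapply is_series_ext; [|exact (is_series_Re _ _ (Hc s Hs))].
    intros n. cbv beta. rewrite cpow_RtoC. unfold Re, Im; simpl. ring. }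
  assert (HIm : forall j, Im (c j) = 0).
  { apply pseries_zero_coef. intros s Hs.
    eapply is_series_ext; [|exact (is_series_Im _ _ (Hc s Hs))].
    intros n. cbv beta. rewrite cpow_RtoC. unfold Re, Im; simpl. ring. }
  intros j. now apply injective_projections.
Qed.

Lemma csum_cons (x : nat) (l : list nat) (g : nat -> C) :
  csum (x :: l) g = (g x + csum l g)%C.
Proof. reflexivity. Qed.

Lemma csum_ext (l : list nat) (g h : nat -> C) :
  (forall x, In x l -> g x = h x) -> csum l g = csum l h.
Proof.
  induction l as [|x l IH]; intros H; simpl; [reflexivity|].
  rewrite H, IH; auto using in_eq, in_cons.
Qed.

Lemma csum_scal_l (l : list nat) (K : C) (g : nat -> C) :
  csum l (fun x => K * g x)%C = (K * csum l g)%C.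
Proof. induction l as [|x l IH]; simpl; [ring|]. rewrite IH. ring. Qed.

Lemma csum_const (s d : nat) (z : C) : csum (seq s d) (fun _ => z) = (INR d * z)%C.
Proof.
  revert s. induction d as [|d IH]; intros s; [simpl; ring|].
  change (csum (seq s (S d)) (fun _ => z)) with (z + csum (seq (S s) d) (fun _ => z))%C.
  rewrite IH, S_INR, RtoC_plus. ring.
Qed.

Lemma csum_geometric (u : C) (s d : nat) :
  (csum (seq s d) (cpow u) * (u - 1))%C = (cpow u (s + d) - cpow u s)%C.
Proof.
  revert s. induction d as [|d IH]; intros s; simpl.
  - rewrite Nat.add_0_r. ring.
  - replace (s + S d)%nat with (S s + d)%nat by lia.
    rewrite Cmult_plus_distr_r, IH. simpl. ring.
Qed.

Lemma is_series_csum (l : list nat) (g : nat -> nat -> C) (S : nat -> C) :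
  (forall x, In x l -> is_series (g x) (S x)) ->
  is_series (fun j => csum l (fun x => g x j)) (csum l S).
Proof.
  induction l as [|x l IH]; intros H; simpl.
  - exact is_series_C0.
  - apply (is_series_plus (g x) (fun j => csum l (fun y => g y j)));
      auto using in_eq, in_cons.
Qed.

Definition cexp2pi (t : R) : C := (cos (2 * PI * t), sin (2 * PI * t)).

Lemma cpow_cexp2pi (t : R) (j : nat) : cpow (cexp2pi t) j = cexp2pi (INR j * t).
Proof.
  induction j as [|j IH]; simpl cpow.
  - unfold cexp2pi. simpl. rewrite Rmult_0_l, Rmult_0_r, cos_0, sin_0. reflexivity.
  - rewrite IH. unfold cexp2pi. rewrite S_INR.
    replace (2 * PI * ((INR j + 1) * t)) with (2 * PI * t + 2 * PI * (INR j * t)) by ring.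
    rewrite cos_plus, sin_plus. apply injective_projections; simpl; ring.
Qed.

Lemma cexp2pi_add_nat (t : R) (n : nat) : cexp2pi (t + INR n) = cexp2pi t.
Proof.
  unfold cexp2pi. replace (2 * PI * (t + INR n)) with (2 * PI * t + 2 * INR n * PI) by ring.
  now rewrite cos_period, sin_period.
Qed.

Lemma cexp2pi_nat (n : nat) : cexp2pi (INR n) = 1%C.
Proof.
  rewrite <- (Rplus_0_l (INR n)), cexp2pi_add_nat. unfold cexp2pi.
  now rewrite Rmult_0_r, cos_0, sin_0.
Qed.

Lemma cexp2pi_frac_neq1 (r d : nat) : (0 < r < d)%nat -> cexp2pi (INR r / INR d) <> 1%C.
Proof.
  intros Hrd E. apply (f_equal fst) in E. unfold cexp2pi in E. simpl in E.
  assert (Hd : 0 < INR d) by (apply lt_0_INR; lia).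
  assert (Hr : 0 < INR r < INR d) by (split; [apply lt_0_INR|apply lt_INR]; lia).
  assert (Hsin : 0 < sin (PI * (INR r / INR d))).
  { apply sin_gt_0.
    - apply Rmult_lt_0_compat; [apply PI_RGT_0|]. apply Rdiv_lt_0_compat; lra.
    - rewrite <- (Rmult_1_r PI) at 2. apply Rmult_lt_compat_l; [apply PI_RGT_0|].
      unfold Rdiv. rewrite <- (Rinv_r (INR d)) by lra.
      apply Rmult_lt_compat_r; [apply Rinv_0_lt_compat|]; lra. }
  replace (2 * PI * (INR r / INR d)) with (2 * (PI * (INR r / INR d))) in E by ring.
  rewrite cos_2a_sin in E. nra.
Qed.

Lemma sum_roots_of_unity (d j : nat) : (0 < d)%nat ->
  csum (seq 0 d) (fun b => cpow (cexp2pi (INR b / INR d)) j)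
  = if (j mod d =? 0)%nat then RtoC (INR d) else RtoC 0.
Proof.
  intros Hd. assert (HdR : INR d <> 0) by (apply not_0_INR; lia).
  set (u := cexp2pi (INR (j mod d) / INR d)).
  assert (Hpow : forall b, cpow (cexp2pi (INR b / INR d)) j = cpow u b).
  { intros b. unfold u.
    rewrite !cpow_cexp2pi, <- (cexp2pi_add_nat (INR b * _) (b * (j / d))).
    assert (Hj : INR j = INR d * INR (j / d) + INR (j mod d))
      by now rewrite <- mult_INR, <- plus_INR, <- Nat.div_mod_eq.
    apply f_equal. rewrite Hj, mult_INR. field. exact HdR. }
  rewrite (csum_ext _ _ _ (fun b _ => Hpow b)).
  destruct (Nat.eqb_spec (j mod d) 0) as [H0|H0].
  - assert (Hu : u = 1%C) by (unfold u; rewrite H0; unfold Rdiv; rewrite Rmult_0_l;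
                               exact (cexp2pi_nat 0)).
    rewrite Hu, (csum_ext _ _ (fun _ => 1%C)), csum_const; [ring|].
    intros b _. rewrite cpow_RtoC, pow1. reflexivity.
  - assert (Hu1 : (u - 1)%C <> 0%C).
    { intros E. apply Ceq_minus in E. revert E. apply cexp2pi_frac_neq1.
      split; [lia|apply Nat.mod_upper_bound; lia]. }
    assert (Hud : cpow u d = 1%C).
    { unfold u. rewrite cpow_cexp2pi, <- (cexp2pi_nat (j mod d)). apply f_equal. field. exact HdR. }
    assert (G := csum_geometric u 0 d). simpl in G. rewrite Hud in G.
    apply (f_equal (fun z => z * / (u - 1))%C) in G.
    rewrite <- Cmult_assoc, Cinv_r, Cmult_1_r in G by exact Hu1.
    rewrite G. ring.
Qed.

Definition supported_on_multiples (d : nat) (v : nat -> C) : Prop :=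
  forall j, (j mod d <> 0)%nat -> v j = RtoC 0.

Lemma sum_n_supported_pad (d : nat) (v : nat -> C) (L r : nat) :
  supported_on_multiples d v -> (r < d)%nat -> sum_n v (d * L + r) = sum_n v (d * L).
Proof.
  intros Hv. induction r as [|r IH]; intros Hr; [now rewrite Nat.add_0_r|].
  rewrite Nat.add_succ_r, sum_Sn, IH by lia.
  rewrite Hv; [exact (Cplus_0_r _)|].
  rewrite <- (Nat.mod_unique _ d L (S r)); lia.
Qed.

Lemma sum_n_supported_subseq (d : nat) (v : nat -> C) (L : nat) :
  (0 < d)%nat -> supported_on_multiples d v ->
  sum_n (fun l => v (d * l)%nat) L = sum_n v (d * L).
Proof.
  intros Hd Hv. induction L as [|L IH].
  - now rewrite Nat.mul_0_r, !sum_O, Nat.mul_0_r.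
  - replace (d * S L)%nat with (S (d * L + (d - 1))) by lia.
    rewrite !sum_Sn, IH, (sum_n_supported_pad d v) by (auto; lia).
    do 2 f_equal. lia.
Qed.

Lemma eventually_mul_l (d : nat) : (0 < d)%nat ->
  filterlim (fun L => (d * L)%nat) eventually eventually.
Proof. intros Hd P [N HN]. exists N. intros n Hn. apply HN. nia. Qed.

Lemma is_series_supported_subseq (d : nat) (v : nat -> C) (S : C) :
  (0 < d)%nat -> supported_on_multiples d v ->
  is_series v S -> is_series (fun l => v (d * l)%nat) S.
Proof.
  intros Hd Hv HS. unfold is_series in *.
  apply (filterlim_ext (fun L => sum_n v (d * L))).
  { intros L. symmetry. now apply sum_n_supported_subseq. }
  eapply filterlim_comp; [apply eventually_mul_l, Hd|exact HS].
Qed.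

Definition dilate (A : nat) (u : nat -> C) (J : nat) : C :=
  if (J mod A =? 0)%nat then u (J / A)%nat else RtoC 0.

Lemma is_series_dilate (A : nat) (u : nat -> C) (S : C) :
  (0 < A)%nat -> is_series u S -> is_series (dilate A u) S.
Proof.
  intros HA HS. unfold is_series in *.
  assert (Hsupp : supported_on_multiples A (dilate A u)).
  { intros j Hj. unfold dilate. now apply Nat.eqb_neq in Hj as ->. }
  assert (Hpartial : forall J, sum_n (dilate A u) J = sum_n u (J / A)).
  { intros J. rewrite (Nat.div_mod_eq J A) at 1.
    rewrite sum_n_supported_pad, <- sum_n_supported_subseq
      by (try apply Nat.mod_upper_bound; auto; lia).
    apply sum_n_ext. intros l. unfold dilate.
    rewrite Nat.mul_comm, Nat.Div0.mod_mul, Nat.div_mul by lia. reflexivity. }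
  apply (filterlim_ext (fun J => sum_n u (J / A))); [intros J; symmetry; apply Hpartial|].
  eapply filterlim_comp; [|exact HS].
  intros P [N HN]. exists (A * N)%nat. intros n Hn. apply HN.
  apply Nat.div_le_lower_bound; lia.
Qed.




(** * The q-expansion of a Hecke operator *)

Lemma exp_pow (x : R) (k : nat) : exp x ^ k = exp (INR k * x).
Proof.
  induction k as [|k IH]; simpl pow; [now rewrite Rmult_0_l, exp_0|].
  rewrite IH, <- exp_plus, S_INR. f_equal. ring.
Qed.

Lemma qexp_imag_axis (y : R) : qexp (0, y) = RtoC (exp (-(2 * PI * y))).
Proof.
  unfold qexp. simpl. rewrite Rmult_0_r, cos_0, sin_0.
  apply injective_projections; simpl; ring.
Qed.

Lemma imag_axis_param (s : R) : 0 < s < 1 -> exists y, 0 < y /\ exp (-(2 * PI * y)) = s.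
Proof.
  intros Hs. pose proof PI_RGT_0. exists (- ln s / (2 * PI)). split.
  - apply Rdiv_lt_0_compat; [|lra].
    enough (ln s < ln 1) by (rewrite ln_1 in *; lra). apply ln_increasing; lra.
  - replace (-(2 * PI * (- ln s / (2 * PI)))) with (ln s) by (field; lra).
    apply exp_ln. lra.
Qed.

Lemma hecke_point (A b d : nat) (y : R) : (0 < d)%nat ->
  ((INR A * (0, y) + INR b) / INR d)%C = (INR b / INR d, INR A * y / INR d).
Proof.
  intros Hd. assert (INR d <> 0) by (apply not_0_INR; lia).
  unfold Cdiv, Cmult, Cplus, Cinv. apply injective_projections; simpl; field; auto.
Qed.

(* Summing [f((A z + b) / d)] over [b < d] keeps exactly the terms [a j q^(A j / d)] with
   [d | j]. *)
Lemma hecke_block_series (f : C -> C) (a : nat -> C) (A d : nat) (y : R) :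
  fourier_expansion f a -> (0 < A)%nat -> (0 < d)%nat -> 0 < y ->
  is_series (fun J => dilate A (fun l => a (d * l)%nat * INR d)%C J
                      * cpow (RtoC (exp (-(2 * PI * y)))) J)%C
    (csum (seq 0 d) (fun b => f ((INR A * (0, y) + INR b) / INR d)%C)).
Proof.
  intros Hf HA Hd Hy.
  assert (HdR : INR d <> 0) by (apply not_0_INR; lia).
  set (E := exp (-(2 * PI * (INR A * y / INR d)))).
  set (v := fun j =>
    (a j * RtoC (E ^ j)%R * (if (j mod d =? 0)%nat then RtoC (INR d) else RtoC 0))%C).
  assert (Hv : is_series v (csum (seq 0 d) (fun b => f ((INR A * (0, y) + INR b) / INR d)%C))).
  { eapply is_series_C_ext;
      [|apply is_series_csum with
          (g := fun b j => (a j * cpow (qexp ((INR A * (0, y) + INR b) / INR d)%C) j)%C)].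
    - intros j. unfold v. rewrite <- sum_roots_of_unity, <- csum_scal_l by exact Hd.
      apply csum_ext. intros b _. rewrite hecke_point by exact Hd.
      change (qexp (INR b / INR d, INR A * y / INR d))
        with (RtoC E * cexp2pi (INR b / INR d))%C.
      rewrite cpow_mult, cpow_RtoC. ring.
    - intros b _. apply Hf. rewrite hecke_point by exact Hd. simpl.
      apply Rdiv_lt_0_compat; [apply Rmult_lt_0_compat|]; auto using lt_0_INR. }
  assert (Hsupp : supported_on_multiples d v).
  { intros j Hj. unfold v. apply Nat.eqb_neq in Hj as ->. ring. }
  assert (Hdil := is_series_dilate A _ _ HA (is_series_supported_subseq d v _ Hd Hsupp Hv)).
  eapply is_series_C_ext; [|exact Hdil].
  intros J. unfold dilate. destruct (Nat.eqb_spec (J mod A) 0) as [H0|H0]; [|ring].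
  unfold v. rewrite (Nat.mul_comm d (J / A)), Nat.Div0.mod_mul. simpl Nat.eqb. cbv iota.
  rewrite (Nat.mul_comm (J / A) d), cpow_RtoC. unfold E. rewrite !exp_pow.
  replace (INR (d * (J / A)) * - (2 * PI * (INR A * y / INR d))) with (INR J * - (2 * PI * y)).
  - ring.
  - rewrite (Nat.div_mod_eq J A) at 1. rewrite H0, Nat.add_0_r, !mult_INR. field. exact HdR.
Qed.

Definition hecke_coef (kap N n : nat) (a : nat -> C) (J : nat) : C :=
  (RtoC (INR n ^ (kap - 1))%R * csum (seq 1 n) (fun A =>
     if andb (n mod A =? 0)%nat (Nat.gcd A N =? 1)%nat
     then / cpow (INR (n / A)) kap * dilate A (fun l => a (n / A * l)%nat * INR (n / A))%C J
     else 0))%C.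

Lemma hecke_q_expansion (f : C -> C) (a : nat -> C) (kap N n : nat) (y : R) :
  fourier_expansion f a -> (0 < n)%nat -> 0 < y ->
  is_series (fun J => hecke_coef kap N n a J * cpow (RtoC (exp (-(2 * PI * y)))) J)%C
    (hecke kap N n f (0, y)).
Proof.
  intros Hf Hn Hy. unfold hecke, hecke_coef.
  set (q := RtoC (exp (-(2 * PI * y)))).
  set (cond := fun A => andb (n mod A =? 0)%nat (Nat.gcd A N =? 1)%nat).
  set (K := fun A => (/ cpow (INR (n / A)) kap)%C).
  set (block := fun A J => dilate A (fun l => a (n / A * l)%nat * INR (n / A))%C J).
  apply (is_series_C_ext (fun J => RtoC (INR n ^ (kap - 1)) *
    csum (seq 1 n) (fun A => if cond A then K A * (block A J * cpow q J) else 0))%C).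
  { intros J.
    transitivity (RtoC (INR n ^ (kap - 1))%R * csum (seq 1 n)
                    (fun A => cpow q J * (if cond A then K A * block A J else 0)))%C.
    - apply (f_equal (Cmult _)), csum_ext. intros A _. destruct (cond A); ring.
    - rewrite csum_scal_l. unfold cond, K, block. ring. }
  apply is_series_Cmult_l, is_series_csum. intros A HA. apply in_seq in HA.
  fold (cond A). destruct (cond A) eqn:Hc; [|apply is_series_C0].
  apply andb_prop in Hc as [HnA _]. apply Nat.eqb_eq, Nat.Lcm0.mod_divide in HnA.
  rewrite csum_scal_l. apply is_series_Cmult_l.
  apply hecke_block_series; auto; [lia|].
  apply Nat.div_str_pos. split; [lia|]. now apply Nat.divide_pos_le.
Qed.

Lemma dilate_1 (u : nat -> C) (J : nat) : dilate 1 u J = u J.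
Proof. unfold dilate. now rewrite Nat.mod_1_r, Nat.div_1_r. Qed.

Lemma hecke_coef_coprime (kap N n J : nat) (a : nat -> C) :
  (0 < n)%nat -> Nat.gcd n J = 1%nat ->
  hecke_coef kap N n a J
  = (RtoC (INR n ^ (kap - 1)) * / cpow (INR n) kap * INR n * a (n * J)%nat)%C.
Proof.
  intros Hn Hcop. destruct n as [|n]; [lia|]. unfold hecke_coef.
  change (seq 1 (S n)) with (1%nat :: seq 2 n). rewrite csum_cons.
  rewrite (csum_ext (seq 2 n) _ (fun _ => 0%C)), csum_const.
  - rewrite Nat.mod_1_r, Nat.div_1_r, dilate_1, cpow_RtoC.
    change (Nat.gcd 1 N) with 1%nat. simpl andb. cbv iota. ring.
  - intros A HA. apply in_seq in HA.
    destruct (Nat.eqb_spec (S n mod A) 0) as [HnA|]; [|reflexivity].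
    assert (HJA : J mod A <> 0%nat).
    { intros HJA. apply Nat.Lcm0.mod_divide in HnA, HJA.
      assert (Hdiv := Nat.gcd_greatest _ _ _ HnA HJA). rewrite Hcop in Hdiv.
      apply Nat.divide_pos_le in Hdiv; lia. }
    unfold dilate. apply Nat.eqb_neq in HJA as ->.
    destruct (Nat.gcd A N =? 1)%nat; simpl; ring.
Qed.

Lemma hecke_eigen_coef (f : C -> C) (a : nat -> C) (kap N n : nat) :
  fourier_expansion f a -> hecke_eigenform kap N f -> (0 < n)%nat ->
  exists lam : C, forall J, hecke_coef kap N n a J = (lam * a J)%C.
Proof.
  intros Hf He Hn. destruct (He n Hn) as [lam Hlam]. exists lam.
  intros J. apply Ceq_minus. revert J.
  apply (cpseries_zero_coef (fun J => hecke_coef kap N n a J - lam * a J)%C).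
  intros s Hs. destruct (imag_axis_param s Hs) as [y [Hy <-]].
  assert (Hf_y := proj2 Hf (0, y) Hy). rewrite qexp_imag_axis in Hf_y.
  assert (Hdiff := is_series_Cminus _ _ _ _ (hecke_q_expansion f a kap N n y Hf Hn Hy)
                     (is_series_Cmult_l lam _ _ Hf_y)).
  rewrite Hlam in Hdiff by exact Hy.
  eapply is_series_C_ext; [|replace (RtoC 0) with (lam * f (0, y) - lam * f (0, y))%C by ring;
                          exact Hdiff].
  intros j. cbv beta. ring.
Qed.

Lemma fourier_coef_mult_coprime (f : C -> C) (a : nat -> C) (kap N n m : nat) :
  fourier_expansion f a -> a 1%nat = RtoC 1 -> hecke_eigenform kap N f ->
  (0 < n)%nat -> Nat.gcd n m = 1%nat -> a (n * m)%nat = (a n * a m)%C.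
Proof.
  intros Hf H1 He Hn Hcop.
  destruct (hecke_eigen_coef f a kap N n Hf He Hn) as [lam Hlam].
  set (al := (RtoC (INR n ^ (kap - 1)) * / cpow (INR n) kap * INR n)%C).
  assert (Hal : al <> 0%C).
  { assert (HnR : INR n <> 0) by (apply not_0_INR; lia).
    assert (Hpow : INR n ^ kap <> 0) by now apply pow_nonzero.
    unfold al. rewrite cpow_RtoC, <- RtoC_inv, <- !RtoC_mult by exact Hpow.
    intros E. apply RtoC_inj in E. revert E.
    repeat apply Rmult_integral_contrapositive_currified;
      auto using pow_nonzero, Rinv_neq_0_compat. }
  assert (Hcoef : forall J, Nat.gcd n J = 1%nat -> (al * a (n * J)%nat)%C = (lam * a J)%C).
  { intros J HJ. rewrite <- Hlam. unfold al. symmetry. now apply hecke_coef_coprime. }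
  assert (Hlam_n : (al * a n)%C = lam).
  { replace (a n) with (a (n * 1)%nat) by now rewrite Nat.mul_1_r.
    rewrite Hcoef, H1 by (rewrite Nat.gcd_comm; reflexivity). apply Cmult_1_r. }
  assert (Hal_nm : (al * a (n * m)%nat)%C = (al * (a n * a m))%C).
  { rewrite Hcoef, <- Hlam_n by exact Hcop. ring. }
  apply (f_equal (Cmult (/ al))) in Hal_nm.
  rewrite !Cmult_assoc, Cinv_l, !Cmult_1_l in Hal_nm by exact Hal. exact Hal_nm.
Qed.

(** * Arithmetic of the shifted arguments and the final estimate *)

Lemma fact_divide_mono (p q : nat) : (p <= q)%nat -> Nat.divide (fact p) (fact q).
Proof.
  induction 1 as [|q _ IH]; [apply Nat.divide_refl|].
  apply (Nat.divide_trans _ (fact q)); [exact IH|]. exists (S q). simpl. lia.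
Qed.

Lemma divide_fact (j p : nat) : (1 <= j <= p)%nat -> Nat.divide j (fact p).
Proof.
  intros Hj. apply (Nat.divide_trans _ (fact j)); [|apply fact_divide_mono; lia].
  destruct j as [|j]; [lia|]. exists (fact j). simpl. lia.
Qed.

Lemma sq_divide_fact_double (v K : nat) : (1 <= v <= K)%nat -> Nat.divide (v * v) (fact (2 * K)).
Proof.
  intros Hv. apply (Nat.divide_trans _ (fact (2 * v))); [|apply fact_divide_mono; lia].
  replace (2 * v)%nat with (S (2 * v - 1)) by lia.
  change (fact (S (2 * v - 1))) with (S (2 * v - 1) * fact (2 * v - 1))%nat.
  replace (S (2 * v - 1))%nat with (2 * v)%nat by lia.
  destruct (divide_fact v (2 * v - 1)) as [w ->]; [lia|].
  exists (2 * w)%nat. ring.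
Qed.

Lemma shift_cofactor_coprime (v m mi : nat) :
  (0 < v)%nat -> Nat.divide (v * v) m -> (m + v = v * mi)%nat -> Nat.gcd v mi = 1%nat.
Proof.
  intros Hv [t Ht] Hmi.
  assert (Emi : mi = (1 + t * v)%nat) by nia.
  rewrite Emi, Nat.gcd_add_mult_diag_r. now rewrite Nat.gcd_comm.
Qed.

Lemma sqrt_pow_pos (n e : nat) : (0 < n)%nat -> 0 < sqrt (INR n) ^ e.
Proof. intros Hn. apply pow_lt, sqrt_lt_R0, lt_0_INR, Hn. Qed.

Lemma Cmod_lambda_f (kap : nat) (a : nat -> C) (n : nat) : (0 < n)%nat ->
  Cmod (lambda_f kap a n) = Cmod (a n) / sqrt (INR n) ^ (kap - 1).
Proof.
  intros Hn. assert (Hpos := sqrt_pow_pos n (kap - 1) Hn).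
  unfold lambda_f. rewrite Cmod_div, Cmod_R, Rabs_pos_eq.
  - reflexivity.
  - lra.
  - intros E. apply RtoC_inj in E. lra.
Qed.

Lemma Cmod_lambda_f_mult (kap : nat) (a : nat -> C) (n m : nat) :
  (0 < n)%nat -> (0 < m)%nat -> a (n * m)%nat = (a n * a m)%C ->
  Cmod (lambda_f kap a (n * m)) = Cmod (lambda_f kap a n) * Cmod (lambda_f kap a m).
Proof.
  intros Hn Hm Hmult.
  assert (Hsn := sqrt_pow_pos n (kap - 1) Hn). assert (Hsm := sqrt_pow_pos m (kap - 1) Hm).
  rewrite !Cmod_lambda_f, Hmult, Cmod_mult, mult_INR, sqrt_mult, Rpow_mult_distr
    by (auto using pos_INR; lia).
  field. lra.
Qed.

Lemma Cmod_lambda_f_shift (f : C -> C) (a : nat -> C) (kap N K nu m mi : nat) :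
  fourier_expansion f a -> a 1%nat = RtoC 1 -> hecke_eigenform kap N f ->
  (1 <= nu <= K)%nat -> Nat.divide (fact (2 * K)) m -> (m + nu = nu * mi)%nat ->
  Cmod (lambda_f kap a (m + nu)) = Cmod (lambda_f kap a nu) * Cmod (lambda_f kap a mi).
Proof.
  intros Hf H1 He HnuK Hdiv Hmi.
  assert (Hcop : Nat.gcd nu mi = 1%nat).
  { apply (shift_cofactor_coprime _ m); [lia| |exact Hmi].
    exact (Nat.divide_trans _ _ _ (sq_divide_fact_double _ _ HnuK) Hdiv). }
  rewrite Hmi. apply Cmod_lambda_f_mult; [lia|nia|].
  apply (fourier_coef_mult_coprime f a kap N); auto; lia.
Qed.

Lemma Cmod_coef_div_sqrt (kap : nat) (a : nat -> C) (M m : nat) :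
  (0 < M)%nat -> (0 < m)%nat ->
  Cmod (a M) / sqrt (INR m) ^ (kap - 1)
  = Cmod (lambda_f kap a M) * sqrt (INR M / INR m) ^ (kap - 1).
Proof.
  intros HM Hm.
  assert (HsM := sqrt_pow_pos M (kap - 1) HM). assert (Hsm := sqrt_pow_pos m (kap - 1) Hm).
  assert (HmR : 0 < INR m) by (apply lt_0_INR; lia).
  rewrite Cmod_lambda_f, sqrt_div_alt by auto.
  unfold Rdiv. rewrite Rpow_mult_distr, pow_inv. field. lra.
Qed.

Lemma sqrt_ratio_pow_bounds (m v e : nat) : (0 < m)%nat ->
  1 <= sqrt (INR (m + v) / INR m) ^ e <= sqrt (INR (1 + v)) ^ e.
Proof.
  intros Hm. assert (HmR : 1 <= INR m) by (apply (le_INR 1); lia).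
  assert (Hratio : 1 <= INR (m + v) / INR m <= INR (1 + v)).
  { rewrite !plus_INR. pose proof (pos_INR v). unfold Rdiv.
    split; apply (Rmult_le_reg_r (INR m)); try lra;
      rewrite Rmult_assoc, Rinv_l, Rmult_1_r by lra; simpl; nra. }
  split.
  - apply pow_R1_Rle. rewrite <- sqrt_1. apply sqrt_le_1_alt. lra.
  - apply pow_incr. split; [apply sqrt_pos|]. apply sqrt_le_1_alt. lra.
Qed.

Lemma scaled_bounds (c L B r x : R) :
  0 < c <= Rmin L (/ (L * B)) -> 1 <= r <= B -> 0 <= x -> c * x <= L * x * r <= / c * x.
Proof.
  intros [Hc HcLB] [Hr HrB] Hx.
  assert (HcL : c <= L) by (eapply Rle_trans; [exact HcLB|apply Rmin_l]).
  assert (HLB : L * B <= / c).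
  { assert (HcLB' : c <= / (L * B)) by (eapply Rle_trans; [exact HcLB|apply Rmin_r]).
    rewrite <- (Rinv_inv (L * B)). apply Rinv_le_contravar; [exact Hc|exact HcLB']. }
  split.
  - apply (Rle_trans _ (L * x)); [apply Rmult_le_compat_r; assumption|].
    rewrite <- (Rmult_1_r (L * x)) at 1. apply Rmult_le_compat_l; [apply Rmult_le_pos|]; lra.
  - replace (L * x * r) with (L * r * x) by ring.
    apply Rmult_le_compat_r; [exact Hx|]. apply (Rle_trans _ (L * B)); [|exact HLB].
    apply Rmult_le_compat_l; lra.
Qed.

Lemma list_max_ge (l : list nat) (x : nat) : In x l -> (x <= list_max l)%nat.
Proof. revert x. apply Forall_forall, list_max_le, le_n. Qed.

Lemma exists_pos_lower_bound (k : nat) (g : nat -> R) :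
  (forall i, (i < k)%nat -> 0 < g i) -> exists c, 0 < c /\ forall i, (i < k)%nat -> c <= g i.
Proof.
  induction k as [|k IH]; intros Hg.
  - exists 1. split; [lra|]. intros i Hi. lia.
  - destruct IH as [c [Hc Hcg]]; [intros i Hi; apply Hg; lia|].
    exists (Rmin c (g k)). split; [apply Rmin_pos; auto|].
    intros i Hi. destruct (Nat.eq_dec i k) as [->|Hik]; [apply Rmin_r|].
    eapply Rle_trans; [apply Rmin_l|]. apply Hcg. lia.
Qed.

Theorem proposition5p1
  (k : nat) (hk : (2 <= k)%nat)
  (kap N : nat -> nat) (f : nat -> C -> C) (a : nat -> nat -> C) (nu : nat -> nat)
  (hprim : forall i, (i < k)%nat -> squarefree (N i) /\ primitive_form (kap i) (N i) (f i) (a i))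
  (hnu_pos : forall i, (i < k)%nat -> (0 < nu i)%nat)
  (hnu_inj : forall i j, (i < k)%nat -> (j < k)%nat -> nu i = nu j -> i = j)
  (hnz : forall i, (i < k)%nat -> a i (nu i) <> RtoC 0) :
  let K := fold_right Nat.max 0%nat (map nu (seq 0 k)) in
  exists c0 : R, 0 < c0 /\
    forall m : nat, (0 < m)%nat -> Nat.divide (fact (2 * K)) m ->
    forall i : nat, (i < k)%nat -> forall mi : nat, (m + nu i = nu i * mi)%nat ->
      (c0 * Cmod (lambda_f (kap i) (a i) mi) <= Cmod (lambda_f (kap i) (a i) ((m + nu i)%nat))
       <= / c0 * Cmod (lambda_f (kap i) (a i) mi)) /\
      (c0 * Cmod (lambda_f (kap i) (a i) mi)
       <= Cmod (a i ((m + nu i)%nat)) / sqrt (INR m) ^ (kap i - 1)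
       <= / c0 * Cmod (lambda_f (kap i) (a i) mi)).
Proof.
  intros K.
  set (L := fun i => Cmod (lambda_f (kap i) (a i) (nu i))).
  set (B := fun i => sqrt (INR (1 + nu i)) ^ (kap i - 1)).
  destruct (exists_pos_lower_bound k (fun i => Rmin (L i) (/ (L i * B i)))) as [c0 [Hc0 Hc0i]].
  { intros i Hi.
    assert (HL : 0 < L i).
    { unfold L. rewrite Cmod_lambda_f by auto.
      apply Rdiv_lt_0_compat; [now apply Cmod_gt_0, hnz|now apply sqrt_pow_pos, hnu_pos]. }
    assert (HB : 0 < B i) by (apply sqrt_pow_pos; lia).
    apply Rmin_pos; [exact HL|]. apply Rinv_0_lt_compat, Rmult_lt_0_compat; assumption. }
  exists c0. split; [exact Hc0|].
  intros m Hm Hdiv i Hi mi Hmi.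
  assert (HnuK : (1 <= nu i <= K)%nat).
  { split; [now apply hnu_pos|]. apply list_max_ge, in_map, in_seq. lia. }
  destruct (hprim i Hi) as [_ (_ & _ & _ & _ & Hf & H1 & He & _)].
  assert (Hlam := Cmod_lambda_f_shift _ _ _ _ _ _ _ _ Hf H1 He HnuK Hdiv Hmi).
  assert (Hratio := sqrt_ratio_pow_bounds m (nu i) (kap i - 1) Hm).
  change (sqrt (INR (1 + nu i)) ^ (kap i - 1)) with (B i) in Hratio.
  pose proof (fun r Hr => scaled_bounds c0 (L i) (B i) r (Cmod (lambda_f (kap i) (a i) mi))
                            (conj Hc0 (Hc0i i Hi)) Hr (Cmod_ge_0 _)) as Hbounds.
  rewrite Cmod_coef_div_sqrt, Hlam by lia.
  split.
  - rewrite <- (Rmult_1_r (L i * _)). apply Hbounds. lra.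
  - apply Hbounds, Hratio.
Qed.
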